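(* For any congruences $R$ and $S$ on the same quandle $X$, $c_X(R\vee S)=c_X(R)\vee c_X(S)$, where $\vee$ denotes the join in the lattice of congruences on $X$.
   Context: A quandle is a set $X$ with two binary operations $\lhd,\lhd^{-1}$ satisfying, for all $x,y,z\in X$: $x\lhd x = x = x\lhd^{-1}x$; $(x\lhd y)\lhd^{-1}y = x = (x\lhd^{-1}y)\lhd y$; $(x\lhd y)\lhd z = (x\lhd z)\lhd(y\lhd z)$ and $(x\lhd^{-1}y)\lhd^{-1}z = (x\lhd^{-1}z)\lhd^{-1}(y\lhd^{-1}z)$. Homomorphisms preserve both operations. A congruence on $X$ is an equivalence relation on $X$ that is a subquandle of $X\times X$. For $x\in X$, the orbit $[x]_X$ is the set of all elements $x\lhd^{\alpha_1}x_1\cdots\lhd^{\alpha_n}x_n$ ($n\ge 0$, $x_i\in X$, $\lhd^{\alpha_i}\in\{\lhd,\lhd^{-1}\}$, bracketed from the left). The effective closure of a congruence $R$ on $X$ (associated with the reflection of quandles onto trivial quandles) is $c_X(R)=\{(x,y)\in X\times X\mid [q(x)]_{X/R}=[q(y)]_{X/R}\}$ where $q\colon X\to X/R$ is the canonical quotient. *)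

(* quandles may be infinite, so we work with plain types and Prop relations. *)
From Stdlib Require Import FunctionalExtensionality PropExtensionality.

Set Implicit Arguments.

Record quandle := Quandle {
  qcar :> Type;
  qop : qcar -> qcar -> qcar;
  qopi : qcar -> qcar -> qcar;
  q_idem : forall x, qop x x = x;
  q_idemi : forall x, qopi x x = x;
  q_right_inv1 : forall x y, qopi (qop x y) y = x;
  q_right_inv2 : forall x y, qop (qopi x y) y = x;
  q_dist : forall x y z, qop (qop x y) z = qop (qop x z) (qop y z);
  q_disti : forall x y z, qopi (qopi x y) z = qopi (qopi x z) (qopi y z)
}.

Inductive orbit (T : Type) (op opi : T -> T -> T) (x : T) : T -> Prop :=
  | orb_refl : orbit op opi x x
  | orb_op : forall y z, orbit op opi x y -> orbit op opi x (op y z)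
  | orb_opi : forall y z, orbit op opi x y -> orbit op opi x (opi y z).

Definition is_congruence (X : quandle) (R : X -> X -> Prop) : Prop :=
  (forall x, R x x) /\
  (forall x y, R x y -> R y x) /\
  (forall x y z, R x y -> R y z -> R x z) /\
  (forall x y x' y', R x y -> R x' y' -> R (qop X x x') (qop X y y')) /\
  (forall x y x' y', R x y -> R x' y' -> R (qopi X x x') (qopi X y y')).

Arguments is_congruence {X} R.

Record congruence (X : quandle) := Congruence {
  crel :> X -> X -> Prop;
  crel_cong : is_congruence crel
}.

Arguments crel {X} _ _ _.
Arguments crel_cong {X} _.
Arguments Congruence {X} crel crel_cong.

Definition rjoin (X : quandle) (R S : X -> X -> Prop) : X -> X -> Prop :=
  fun x y => forall T : X -> X -> Prop, is_congruence T ->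
    (forall a b, R a b -> T a b) -> (forall a b, S a b -> T a b) -> T x y.

Arguments rjoin {X} R S _ _.

Lemma rjoin_cong (X : quandle) (R S : X -> X -> Prop) : is_congruence (rjoin R S).
Proof.
  unfold rjoin; repeat split.
  - intros x T [H _] _ _; apply H.
  - intros x y H T HT HR HS. pose proof HT as (_ & Hs & _). apply Hs, H; auto.
  - intros x y z H1 H2 T HT HR HS. pose proof HT as (_ & _ & Ht & _).
    apply Ht with y; [apply H1|apply H2]; auto.
  - intros x y x' y' H1 H2 T HT HR HS. pose proof HT as (_ & _ & _ & Ho & _).
    apply Ho; [apply H1|apply H2]; auto.
  - intros x y x' y' H1 H2 T HT HR HS. pose proof HT as (_ & _ & _ & _ & Ho).
    apply Ho; [apply H1|apply H2]; auto.
Qed.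

Definition cjoin (X : quandle) (R S : congruence X) : congruence X :=
  @Congruence X (rjoin R S) (@rjoin_cong X R S).

(** The quotient X/R: carrier = equivalence classes R x (as predicates). *)
Section Quotient.
Variables (X : quandle) (R : congruence X).

Definition qclass := { C : X -> Prop | exists x, C = crel R x }.

Definition qproj (x : X) : qclass := exist _ (crel R x) (ex_intro _ x eq_refl).

Lemma class_op_eq (op : X -> X -> X)
  (Hop : forall x y x' y', R x y -> R x' y' -> R (op x x') (op y y')) (x y : X) :
  (fun z => exists a b, R x a /\ R y b /\ R (op a b) z) = crel R (op x y).
Proof.
  destruct (crel_cong R) as (Hr & Hs & Ht & _).
  apply functional_extensionality; intro z; apply propositional_extensionality; split.
  - intros (a & b & Ha & Hb & Hz). eapply Ht; [apply Hop; eassumption|exact Hz].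
  - intros Hz. exists x, y. auto.
Qed.

Definition qlift (op : X -> X -> X)
  (Hop : forall x y x' y', R x y -> R x' y' -> R (op x x') (op y y'))
  (C D : qclass) : qclass.
Proof.
  refine (exist _ (fun z => exists a b, proj1_sig C a /\ proj1_sig D b /\ R (op a b) z) _).
  destruct C as [C [x ->]], D as [D [y ->]]; simpl.
  exists (op x y). apply class_op_eq; exact Hop.
Defined.

Definition quot_op : qclass -> qclass -> qclass :=
  @qlift (qop X) (proj1 (proj2 (proj2 (proj2 (crel_cong R))))).
Definition quot_opi : qclass -> qclass -> qclass :=
  @qlift (qopi X) (proj2 (proj2 (proj2 (proj2 (crel_cong R))))).

End Quotient.

(** Effective closure: c_X(R) = {(x,y) | [q(x)]_{X/R} = [q(y)]_{X/R}}. *)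
Definition eff_closure (X : quandle) (R : congruence X) : X -> X -> Prop :=
  fun x y => orbit (@quot_op X R) (@quot_opi X R) (@qproj X R x)
           = orbit (@quot_op X R) (@quot_opi X R) (@qproj X R y).

Arguments eff_closure {X} R _ _.

(* The effective closure of a congruence R is the composite O ∘ R of the orbit
   relation O (x O y iff y lies in the orbit of x) with R: the orbit of q(x) in
   X/R consists of the classes of the orbit of x.  Because every congruence can
   be pushed along orbits, O ∘ R is itself a congruence, and the least
   congruence containing both O and R.  Hence c(R ∨ S) and c(R) ∨ c(S) are both
   the least congruence containing O, R and S. *)
From Stdlib Require Import FunctionalExtensionality PropExtensionality ProofIrrelevance.

Set Implicit Arguments.
Unset Strict Implicit.

Section Congruence.
Variables (X : quandle) (R : X -> X -> Prop).
Hypothesis HR : is_congruence R.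

Lemma cong_refl x : R x x.
Proof. exact (proj1 HR x). Qed.

Lemma cong_sym x y : R x y -> R y x.
Proof. exact (proj1 (proj2 HR) x y). Qed.

Lemma cong_trans y x z : R x y -> R y z -> R x z.
Proof. exact (proj1 (proj2 (proj2 HR)) x y z). Qed.

Lemma cong_op x y x' y' : R x y -> R x' y' -> R (qop X x x') (qop X y y').
Proof. exact (proj1 (proj2 (proj2 (proj2 HR))) x y x' y'). Qed.

Lemma cong_opi x y x' y' : R x y -> R x' y' -> R (qopi X x x') (qopi X y y').
Proof. exact (proj2 (proj2 (proj2 (proj2 HR))) x y x' y'). Qed.

End Congruence.

Lemma orbit_trans (T : Type) (op opi : T -> T -> T) x y z :
  orbit op opi x y -> orbit op opi y z -> orbit op opi x z.
Proof. intros Hxy Hyz; induction Hyz; [exact Hxy | apply orb_op | apply orb_opi]; auto. Qed.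

Section Orbits.
Variable X : quandle.

Notation O := (orbit (qop X) (qopi X)).

Lemma orbit_sym x y : O x y -> O y x.
Proof.
  intro H; induction H as [| y z _ IH | y z _ IH].
  - constructor.
  - apply orbit_trans with y; auto.
    rewrite <- (q_right_inv1 X y z) at 2. apply orb_opi, orb_refl.
  - apply orbit_trans with y; auto.
    rewrite <- (q_right_inv2 X y z) at 2. apply orb_op, orb_refl.
Qed.

Section Composite.
Variable T : congruence X.

Definition orbit_comp (x y : X) : Prop := exists z, O x z /\ T z y.

Lemma cong_push_orbit y u : O y u -> forall z, T z y -> exists z', O z z' /\ T z' u.
Proof.
  pose proof (crel_cong T) as HT.
  intro H; induction H as [| v z _ IH | v z _ IH]; intros w Hw.
  - exists w; split; [constructor | exact Hw].
  - destruct (IH w Hw) as (z' & Hwz' & Hz').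
    exists (qop X z' z); split; [apply orb_op, Hwz' | exact (cong_op HT Hz' (cong_refl HT z))].
  - destruct (IH w Hw) as (z' & Hwz' & Hz').
    exists (qopi X z' z); split; [apply orb_opi, Hwz' | exact (cong_opi HT Hz' (cong_refl HT z))].
Qed.

Lemma orbit_comp_of_orbit x y : O x y -> orbit_comp x y.
Proof. intro H; exists y; split; [exact H | apply cong_refl, (crel_cong T)]. Qed.

Lemma orbit_comp_of_cong x y : T x y -> orbit_comp x y.
Proof. intro H; exists x; split; [constructor | exact H]. Qed.

Lemma orbit_comp_sym x y : orbit_comp x y -> orbit_comp y x.
Proof.
  intros (z & Hxz & Hzy).
  destruct (cong_push_orbit (orbit_sym Hxz) (cong_sym (crel_cong T) Hzy)) as (z' & ? & ?).
  exists z'; auto.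
Qed.

Lemma orbit_comp_trans x y w : orbit_comp x y -> orbit_comp y w -> orbit_comp x w.
Proof.
  intros (z & Hxz & Hzy) (u & Hyu & Huw).
  destruct (cong_push_orbit Hyu Hzy) as (z' & Hzz' & Hz'u).
  exists z'; split.
  - apply orbit_trans with z; assumption.
  - exact (cong_trans (crel_cong T) Hz'u Huw).
Qed.

Lemma orbit_comp_cong : is_congruence orbit_comp.
Proof.
  assert (Horb : forall x y x' y', orbit_comp x y -> O x x' -> O y y' -> orbit_comp x' y').
  { intros x y x' y' H Hx Hy.
    apply orbit_comp_trans with x; [apply orbit_comp_of_orbit, orbit_sym, Hx |].
    apply orbit_comp_trans with y; [exact H | apply orbit_comp_of_orbit, Hy]. }
  repeat split.
  - intro x; apply orbit_comp_of_orbit, orb_refl.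
  - apply orbit_comp_sym.
  - apply orbit_comp_trans.
  - intros x y x' y' H _; apply (Horb _ _ _ _ H); apply orb_op, orb_refl.
  - intros x y x' y' H _; apply (Horb _ _ _ _ H); apply orb_opi, orb_refl.
Qed.

End Composite.

Lemma orbit_comp_least (T : congruence X) (J : X -> X -> Prop) : is_congruence J ->
  (forall x y, O x y -> J x y) -> (forall x y, T x y -> J x y) ->
  forall x y, orbit_comp T x y -> J x y.
Proof.
  intros HJ HO HT x y (z & Hxz & Hzy).
  apply cong_trans with z; auto.
Qed.

Lemma orbit_comp_mono (T T' : congruence X) :
  (forall x y, T x y -> T' x y) -> forall x y, orbit_comp T x y -> orbit_comp T' x y.
Proof. intros HTT' x y (z & Hxz & Hzy); exists z; auto. Qed.

End Orbits.

Section QuotientOrbits.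
Variables (X : quandle) (T : congruence X).

Notation Q := (orbit (@quot_op X T) (@quot_opi X T)).

Lemma qproj_eq a b : T a b -> qproj T a = qproj T b.
Proof.
  intro Hab; apply subset_eq_compat.
  pose proof (crel_cong T) as HT.
  apply functional_extensionality; intro z; apply propositional_extensionality; split.
  - intro Haz; apply (cong_trans HT (cong_sym HT Hab) Haz).
  - intro Hbz; apply (cong_trans HT Hab Hbz).
Qed.

Lemma qproj_inj a b : qproj T a = qproj T b -> T a b.
Proof.
  intro H; apply (f_equal (@proj1_sig _ _)) in H; simpl in H.
  rewrite H; apply cong_refl, (crel_cong T).
Qed.

Lemma qproj_surj (C : qclass T) : exists v, C = qproj T v.
Proof. destruct C as [P [v ->]]; exists v; reflexivity. Qed.

Lemma quot_op_qproj a b : @quot_op X T (qproj T a) (qproj T b) = qproj T (qop X a b).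
Proof. apply subset_eq_compat, class_op_eq, (crel_cong T). Qed.

Lemma quot_opi_qproj a b : @quot_opi X T (qproj T a) (qproj T b) = qproj T (qopi X a b).
Proof. apply subset_eq_compat, class_op_eq, (crel_cong T). Qed.

Lemma quot_orbit_qproj x C :
  Q (qproj T x) C <-> exists z, orbit (qop X) (qopi X) x z /\ C = qproj T z.
Proof.
  split.
  - intro H; induction H as [| C D _ IH | C D _ IH].
    + exists x; split; [constructor | reflexivity].
    + destruct IH as (w & Hw & ->); destruct (qproj_surj D) as [v ->].
      exists (qop X w v); split; [apply orb_op, Hw | apply quot_op_qproj].
    + destruct IH as (w & Hw & ->); destruct (qproj_surj D) as [v ->].
      exists (qopi X w v); split; [apply orb_opi, Hw | apply quot_opi_qproj].
  - intros (z & Hz & ->); induction Hz.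
    + constructor.
    + rewrite <- quot_op_qproj; apply orb_op; assumption.
    + rewrite <- quot_opi_qproj; apply orb_opi; assumption.
Qed.

Lemma quot_orbit_incl x y :
  orbit_comp T x y -> forall C, Q (qproj T x) C -> Q (qproj T y) C.
Proof.
  intros Hxy C HC; apply quot_orbit_qproj in HC as (w & Hxw & ->).
  assert (Hyw : orbit_comp T y w)
    by (apply orbit_comp_trans with x; [apply orbit_comp_sym, Hxy | apply orbit_comp_of_orbit, Hxw]).
  destruct Hyw as (w' & Hyw' & Hw'w).
  rewrite <- (qproj_eq Hw'w); apply quot_orbit_qproj; exists w'; auto.
Qed.

Lemma eff_closureE : eff_closure T = orbit_comp T.
Proof.
  apply functional_extensionality; intro x; apply functional_extensionality; intro y.
  apply propositional_extensionality; split.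
  - intro H.
    assert (Hy : Q (qproj T y) (qproj T y)) by constructor.
    unfold eff_closure in H; rewrite <- H in Hy.
    apply quot_orbit_qproj in Hy as (z & Hxz & Hyz).
    exists z; split; [exact Hxz | apply qproj_inj; symmetry; exact Hyz].
  - intro H; unfold eff_closure.
    apply functional_extensionality; intro C; apply propositional_extensionality; split.
    + apply quot_orbit_incl, H.
    + apply quot_orbit_incl, orbit_comp_sym, H.
Qed.

End QuotientOrbits.

Theorem mainTheorem12 (X : quandle) (R S : congruence X) :
  eff_closure (cjoin R S) = rjoin (eff_closure R) (eff_closure S).
Proof.
  rewrite !eff_closureE.
  apply functional_extensionality; intro x; apply functional_extensionality; intro y.
  apply propositional_extensionality; split.
  - intros Hxy J HJ HRJ HSJ.
    refine (orbit_comp_least (T := cjoin R S) HJ _ _ Hxy).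
    + intros a b Hab; apply HRJ, orbit_comp_of_orbit, Hab.
    + intros a b Hab; apply Hab; [exact HJ | |]; intros c d Hcd.
      * apply HRJ, orbit_comp_of_cong, Hcd.
      * apply HSJ, orbit_comp_of_cong, Hcd.
  - intro H; apply H; [apply orbit_comp_cong | |]; apply orbit_comp_mono;
      intros a b Hab T HT HRT HST; auto.
Qed.
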